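(* For any $h$ and any $\mu_{h-1}:\mathcal X\to\mathbb R^{\mathsf d}$, the class $$\mathcal W_h(\mu_{h-1})=\Big\{w=\frac{\langle\mu_{h-1},\theta^{\rm up}\rangle}{\langle\mu_{h-1},\theta^{\rm down}\rangle}:\|w\|_\infty\le C^{\mathbf x}_{h-1}C^{\mathbf a}_{h-1},\ \theta^{\rm up},\theta^{\rm down}\in\mathbb R^{\mathsf d}\Big\}$$ has pseudo-dimension $\mathrm{Pdim}(\mathcal W_h(\mu_{h-1}))\le4(\mathsf d+1)\log(8e)$.
   Context: $C^{\mathbf x}_{h-1},C^{\mathbf a}_{h-1}>0$ are constants. Pseudo-dimension of $\mathcal F\subseteq\mathbb R^{\mathcal X}$: the largest $m$ such that some $x_1,\dots,x_m\in\mathcal X$ are pseudo-shattered, i.e. there exist $c_1,\dots,c_m\in\mathbb R$ such that for every $y\in\{-1,+1\}^m$ some $f\in\mathcal F$ has $\mathrm{sgn}(f(x_i)-c_i)=y_i$ for all $i$. *)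

From mathcomp Require Import all_boot all_order all_algebra.
From mathcomp Require Import all_classical all_reals all_analysis.
Set Implicit Arguments. Unset Strict Implicit. Unset Printing Implicit Defensive.
Import Order.TTheory GRing.Theory Num.Theory.
Local Open Scope ring_scope.
Local Open Scope classical_set_scope.

Definition dotp (R : realType) (d : nat) (u v : 'I_d -> R) : R :=
  \sum_(i < d) u i * v i.

(* The class W_h(mu_{h-1}) : ratios of linear functionals of the feature map mu
   with sup-norm at most Cx * Ca. (Division by 0 follows MathComp: x/0 = 0.) *)
Definition W_class (R : realType) (X : Type) (d : nat) (mu : X -> 'I_d -> R)
  (Cx Ca : R) : set (X -> R) :=
  [set w | exists tup tdown : 'I_d -> R,
      (forall x, w x = dotp (mu x) tup / dotp (mu x) tdown) /\
      (forall x, `|w x| <= Cx * Ca)].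

Definition pseudo_shattered (R : realType) (X : Type) (F : set (X -> R))
  (m : nat) (xs : 'I_m -> X) : Prop :=
  exists c : 'I_m -> R, forall y : 'I_m -> bool, exists f, F f /\
    forall i, Num.sg (f (xs i) - c i) = (if y i then 1 else -1).

Definition pdim_le (R : realType) (X : Type) (F : set (X -> R)) (b : R) : Prop :=
  forall (m : nat) (xs : 'I_m -> X), pseudo_shattered F xs -> (m%:R <= b).

From HB Require Import structures.
From mathcomp Require Import all_boot all_order all_algebra.
From mathcomp Require Import all_classical all_reals all_analysis.
From mathcomp Require Import ring lra zify.
Import Order.TTheory GRing.Theory Num.Theory.
Local Open Scope ring_scope.
Set Implicit Arguments. Unset Strict Implicit. Unset Printing Implicit Defensive.

(* Since a / b - c = (a - c b) / b (and a / 0 - c = - c), the sign of w(x) - c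
   for w = <mu x, th> / <mu x, th'> is determined by the signs of the two linear
   forms (th, th') |-> <mu x, th> - c <mu x, th'> and (th, th') |-> <mu x, th'>.
   Pseudo-shattering m points thus makes 2m linear forms on a space of dimension
   2d realise 2^m sign patterns.  Forgetting the sign of a form f is injective on
   each of its three sign classes, and a pattern of the other forms occurring on
   both sides of ker f, or on it, occurs on ker f by convexity; so the number
   N(k, n) of patterns of k forms on an n-dimensional space satisfies
   N(k, n) <= N(k-1, n) + 2 N(k-1, n-1).  The weight 20^n (11/10)^k obeys this
   recursion because 1 + 2/20 = 11/10, so 200^m <= 400^d 121^m, whence
   m <= 12 d <= 4 (d+1) ln(8e). *)

Section Sign3.
Variable R : realFieldType.

Definition sign3 (x : R) : bool * bool := (0 < x, x < 0).

Lemma sign3_eq0 x : (sign3 x == (false, false)) = (x == 0).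
Proof. by rewrite /sign3 xpair_eqE !eqbF_neg -!leNgt andbC -eq_le. Qed.

Lemma sign3_sgr x y : sign3 x = sign3 y -> Num.sg x = Num.sg y.
Proof. by rewrite /sign3 => -[]; case: (sgrP x) => _; case: (sgrP y). Qed.

Lemma sign3_convex a b s : 0 <= s <= 1 -> sign3 a = sign3 b ->
  sign3 (s * a + (1 - s) * b) = sign3 a.
Proof.
case/andP=> s_ge0 s_le1; rewrite /sign3 => -[ab_pos ab_neg].
have [a_gt0|a_lt0|a0] := ltgtP 0 a.
- have b_gt0 : 0 < b by rewrite -ab_pos.
  have comb_gt0 : 0 < s * a + (1 - s) * b by nra.
  by rewrite comb_gt0 (lt_gtF comb_gt0).
- have b_lt0 : b < 0 by rewrite -ab_neg.
  have comb_lt0 : s * a + (1 - s) * b < 0 by nra.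
  by rewrite comb_lt0 (lt_gtF comb_lt0).
- have b0 : b = 0 by apply/eqP; rewrite eq_le !leNgt -ab_pos -ab_neg -a0 ltxx.
  by rewrite b0 -a0 !mulr0 addr0 ltxx.
Qed.

Lemma convex_root a b :
  b < 0 < a -> exists2 s : R, 0 <= s <= 1 & s * a + (1 - s) * b = 0.
Proof.
case/andP=> b_lt0 a_gt0; have ab_gt0 : 0 < a - b by lra.
exists (- b / (a - b)); last by field; lra.
by rewrite divr_ge0 ?ler_pdivrMr /=; lra.
Qed.

Lemma sgr_ratio_sub (a b c : R) :
  Num.sg (a / b - c) = if b == 0 then - Num.sg c else Num.sg (a - c * b) * Num.sg b.
Proof.
have [->|b_neq0] := eqVneq b 0; first by rewrite invr0 mulr0 sub0r sgrN.
by rewrite -[c in LHS](mulfK b_neq0) -mulrBl sgrM sgrV.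
Qed.

Lemma sgr_ratio_sub_sign3 (a b a' b' c : R) :
  sign3 (a - c * b) = sign3 (a' - c * b') -> sign3 b = sign3 b' ->
  Num.sg (a / b - c) = Num.sg (a' / b' - c).
Proof.
move=> /sign3_sgr num_eq /sign3_sgr den_eq.
have b_eq0 : (b == 0) = (b' == 0) by rewrite -sgr_eq0 den_eq sgr_eq0.
by rewrite !sgr_ratio_sub b_eq0 num_eq den_eq.
Qed.

End Sign3.

Section FfunBehead.
Variable T : Type.

Definition ffun_behead k (p : {ffun 'I_k.+1 -> T}) : {ffun 'I_k -> T} :=
  [ffun i => p (lift ord0 i)].

Lemma ffun_behead_inj k (p q : {ffun 'I_k.+1 -> T}) :
  p ord0 = q ord0 -> ffun_behead p = ffun_behead q -> p = q.
Proof.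
move=> pq0 /ffunP pq; apply/ffunP => i; case: (unliftP ord0 i) => [j ->|->] //.
by have := pq j; rewrite !ffunE.
Qed.

End FfunBehead.

Lemma card_imset_ffun_behead (T : finType) k (S : {set {ffun 'I_k.+1 -> T}}) s :
  {in S, forall p : {ffun 'I_k.+1 -> T}, p ord0 = s} ->
  #|[set ffun_behead p | p in S]| = #|S|.
Proof.
move=> S0; apply: card_in_imset => p q pS qS; apply: ffun_behead_inj.
by rewrite S0 ?S0.
Qed.

Section SignPatterns.
Variables (R : realFieldType) (vT : vectType R).

Definition pattern k (F : 'I_k -> 'Hom(vT, R^o)) (t : vT) : {ffun 'I_k -> bool * bool} :=
  [ffun i => sign3 (F i t)].

Definition patterns k (F : 'I_k -> 'Hom(vT, R^o)) (U : {vspace vT}) :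
    {set {ffun 'I_k -> bool * bool}} :=
  [set p | `[< exists2 t, t \in U & pattern F t = p >]].

Lemma patternsP k (F : 'I_k -> 'Hom(vT, R^o)) (U : {vspace vT}) p :
  reflect (exists2 t, t \in U & pattern F t = p) (p \in patterns F U).
Proof. by rewrite inE; apply: asboolP. Qed.

Lemma mem_patterns k (F : 'I_k -> 'Hom(vT, R^o)) (U : {vspace vT}) t :
  t \in U -> pattern F t \in patterns F U.
Proof. by move=> tU; apply/patternsP; exists t. Qed.

Lemma ffun_behead_pattern k (F : 'I_k.+1 -> 'Hom(vT, R^o)) t :
  ffun_behead (pattern F t) = pattern (F \o lift ord0) t.
Proof. by apply/ffunP => i; rewrite !ffunE. Qed.

Lemma mem_patterns_lker k (F : 'I_k -> 'Hom(vT, R^o)) (f : 'Hom(vT, R^o))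
    (U : {vspace vT}) t1 t2 :
  t1 \in U -> t2 \in U -> f t2 < 0 < f t1 -> pattern F t1 = pattern F t2 ->
  pattern F t1 \in patterns F (U :&: lker f).
Proof.
move=> t1U t2U /convex_root[s s01 fs0] /ffunP F12.
pose t := s *: t1 + (1 - s) *: t2.
have -> : pattern F t1 = pattern F t.
  apply/ffunP => i; have := F12 i; rewrite !ffunE !linearD !linearZ /=.
  by move/(sign3_convex s01) ->.
apply: mem_patterns; rewrite memv_cap memv_ker linearD !linearZ /= fs0 eqxx.
by rewrite memvD ?memvZ.
Qed.

Lemma dim_cap_lker (f : 'Hom(vT, R^o)) (U : {vspace vT}) :
  ~~ (U <= lker f)%VS -> (\dim (U :&: lker f)).+1 = \dim U.
Proof.
rewrite lkerE -dimv_eq0 -lt0n => img_gt0.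
rewrite -(limg_ker_dim f U) -addn1; congr (_ + _); apply/esym/eqP.
by rewrite eqn_leq img_gt0 andbT (leq_trans (dimvS (subvf _))) // dimvf.
Qed.

Lemma card_patterns_rec k (F : 'I_k.+1 -> 'Hom(vT, R^o)) (U : {vspace vT}) :
  (#|patterns F U| <= #|patterns (F \o lift ord0) U|
                      + 2 * #|patterns (F \o lift ord0) (U :&: lker (F ord0))|)%N.
Proof.
set G := F \o lift ord0; set H := patterns G (U :&: _).
pose P s := [set p in patterns F U | p ord0 == s].
pose Q s := [set ffun_behead p | p in P s].
have cardQ s : #|Q s| = #|P s|.
  by apply: (card_imset_ffun_behead (s := s)) => p; rewrite inE => /andP[_ /eqP].
have QP s q :
    q \in Q s -> exists2 t, t \in U & sign3 (F ord0 t) = s /\ pattern G t = q.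
  case/imsetP=> p; rewrite inE => /andP[/patternsP[t tU <-]].
  by rewrite ffunE => /eqP <- ->; exists t; rewrite ?ffun_behead_pattern.
have sub_pos_neg : Q (true, false) :|: Q (false, true) \subset patterns G U.
  by apply/fintype.subsetP => q /setUP[] /QP[t tU [_ <-]]; apply: mem_patterns.
have sub_mixed : Q (true, false) :&: Q (false, true) \subset H.
  apply/fintype.subsetP => q.
  case/setIP=> /QP[t1 t1U [[pos1 _] <-]] /QP[t2 t2U [[_ neg2] t21]].
  by apply: mem_patterns_lker t1U t2U _ (esym t21); rewrite pos1 neg2.
have sub_zero : Q (false, false) \subset H.
  apply/fintype.subsetP => q /QP[t tU [/eqP t0 <-]]; apply: mem_patterns.
  by rewrite memv_cap tU memv_ker -sign3_eq0 t0.
have cover :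
    patterns F U \subset P (true, false) :|: P (false, true) :|: P (false, false).
  apply/fintype.subsetP => p pFU; rewrite !inE asboolT /=; last exact/patternsP.
  by case/patternsP: pFU => t _ <-; rewrite ffunE /sign3; case: ltgtP.
apply: (leq_trans (subset_leq_card cover)); rewrite mul2n -addnn addnA.
apply: (leq_trans (leq_card_setU _ _)); apply: leq_add; last first.
  by rewrite -cardQ subset_leq_card.
apply: (leq_trans (leq_card_setU _ _)); rewrite -!cardQ -cardsUI.
by apply: leq_add; apply: subset_leq_card.
Qed.

Lemma card_patterns_lker k (F : 'I_k.+1 -> 'Hom(vT, R^o)) (U : {vspace vT}) :
  (U <= lker (F ord0))%VS -> (#|patterns F U| <= #|patterns (F \o lift ord0) U|)%N.
Proof.
move=> U_ker.
rewrite -(@card_imset_ffun_behead _ _ _ (false, false)); last first.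
  move=> p /patternsP[t tU <-]; rewrite ffunE.
  by have /(subvP U_ker) := tU; rewrite memv_ker => /eqP ->; rewrite /sign3 ltxx.
apply/subset_leq_card/fintype.subsetP => q /imsetP[p /patternsP[t tU <-] ->].
by rewrite ffun_behead_pattern mem_patterns.
Qed.

Theorem card_patterns_le k (F : 'I_k -> 'Hom(vT, R^o)) (U : {vspace vT}) :
  (#|patterns F U| * 10 ^ k <= 20 ^ \dim U * 11 ^ k)%N.
Proof.
elim: k F U => [|k IHk] F U.
  rewrite !expn0 !muln1; apply: leq_trans (max_card _) _.
  by rewrite card_ffun card_ord expn0 expn_gt0.
have [U_ker|U_not_ker] := boolP (U <= lker (F ord0))%VS.
  have := leq_trans (leq_mul (card_patterns_lker U_ker) (leqnn (10 ^ k))) (IHk _ U).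
  rewrite !expnS; lia.
have dimU := dim_cap_lker U_not_ker.
have : (#|patterns F U| * 10 ^ k <=
        20 ^ \dim U * 11 ^ k + 2 * (20 ^ \dim (U :&: lker (F ord0)) * 11 ^ k))%N.
  apply: leq_trans (leq_mul (card_patterns_rec F U) (leqnn _)) _.
  by rewrite mulnDl -mulnA leq_add ?leq_mul2l ?IHk.
rewrite -dimU !expnS; lia.
Qed.

End SignPatterns.

Lemma expn_growth_bound a b c q m n : (0 < b)%N -> (0 < c < a)%N ->
  (b * c ^ q <= a ^ q)%N -> (a ^ m <= b ^ n * c ^ m)%N -> (m <= q * n)%N.
Proof.
move=> b_gt0 /andP[c_gt0 lt_ca] le_q; rewrite [(m <= _)%N]leqNgt.
apply: contraTN => /subnKC <-; move: (m - _)%N => e.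
rewrite -ltnNge addSnnS !expnD mulnA.
have le_qn : (b ^ n * c ^ (q * n) <= a ^ (q * n))%N.
  rewrite !expnM -expnMn.
  by case: n => [|n]; rewrite ?expn0 ?leq_exp2r.
have lt_e : (c ^ e.+1 < a ^ e.+1)%N by rewrite ltn_exp2r.
apply: (leq_ltn_trans (leq_mul le_qn (leqnn _))).
by rewrite ltn_pmul2l ?expn_gt0 ?(ltn_trans c_gt0 lt_ca).
Qed.

Section RatioClass.
Variables (R : realType) (V : vectType R) (X : Type) (ell : X -> 'Hom(V, R^o)).

Definition ratio_class : set (X -> R) :=
  fun w => exists theta theta' : V, forall x, w x = ell x theta / ell x theta'.

Definition ratio_num x (c : R) : 'Hom((V * V)%type, R^o) :=
  (ell x \o linfun fst - c *: (ell x \o linfun snd))%VF.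

Definition ratio_den x : 'Hom((V * V)%type, R^o) := (ell x \o linfun snd)%VF.

Lemma ratio_numE x c t : ratio_num x c t = ell x t.1 - c * ell x t.2.
Proof. by rewrite add_lfunE opp_lfunE scale_lfunE !comp_lfunE !lfunE. Qed.

Lemma ratio_denE x t : ratio_den x t = ell x t.2.
Proof. by rewrite comp_lfunE lfunE. Qed.

Lemma ratio_class_shattered_le m (xs : 'I_m -> X) :
  pseudo_shattered ratio_class xs -> (m <= 12 * dim V)%N.
Proof.
case=> c shattered.
have /choice[theta sg_theta] : forall y : 'I_m -> bool,
    exists t : (V * V)%type, forall i,
      Num.sg (ell (xs i) t.1 / ell (xs i) t.2 - c i) = if y i then 1 else -1.
  move=> y; have [w [[t [t' wE]] sg_w]] := shattered y.
  by exists (t, t') => i; rewrite -wE sg_w.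
pose F (j : 'I_(m + m)) :=
  match fintype.split j with
  | inl i => ratio_num (xs i) (c i)
  | inr i => ratio_den (xs i)
  end.
have pattern_inj : injective (fun y : {ffun 'I_m -> bool} => pattern F (theta y)).
  move=> y y' /ffunP same_signs; apply/ffunP => i.
  have := same_signs (lshift m i); have := same_signs (rshift m i).
  rewrite !ffunE /F (unsplitK (inl _ i)) (unsplitK (inr _ i)) !ratio_numE !ratio_denE.
  move=> /sgr_ratio_sub_sign3 sg_eq /sg_eq; rewrite !sg_theta.
  by case: (y i) (y' i) => [] [] // one_eqN1; exfalso; lra.
have card_pattern : (2 ^ m <= #|patterns F fullv|)%N.
  have <- : #|[set: {ffun 'I_m -> bool}]| = (2 ^ m)%N.
    by rewrite cardsT card_ffun card_bool card_ord.
  rewrite -(card_imset _ pattern_inj); apply/subset_leq_card/fintype.subsetP.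
  by move=> _ /imsetP[y _ ->]; apply/mem_patterns/memvf.
have le_pow : (200 ^ m <= 400 ^ dim V * 121 ^ m)%N.
  have := leq_trans (leq_mul card_pattern (leqnn _)) (card_patterns_le F fullv).
  by rewrite dimvf !expnD -!expnMn.
by apply: expn_growth_bound le_pow; lia.
Qed.

End RatioClass.

Section DotpForm.
Variables (R : realType) (d : nat).

Definition dotp_form (a : 'I_d -> R) (v : 'rV[R]_d) : R^o := dotp a (v 0).

Fact dotp_form_is_linear a : linear (dotp_form a).
Proof.
move=> k u v; rewrite /dotp_form /dotp scaler_sumr -big_split.
by apply: eq_bigr => i _; rewrite !mxE mulrDr mulrCA.
Qed.

HB.instance Definition _ a :=
  GRing.isLinear.Build R 'rV[R]_d R^o *:%R (dotp_form a) (dotp_form_is_linear a).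

End DotpForm.

Lemma W_class_sub (R : realType) (X : Type) d (mu : X -> 'I_d -> R) Cx Ca :
  (W_class mu Cx Ca `<=` ratio_class (fun x => linfun (dotp_form (mu x))))%classic.
Proof.
move=> w [tup [tdown [wE _]]]; exists (\row_i tup i), (\row_i tdown i) => x.
rewrite wE !lfunE /dotp_form /dotp.
by congr (_ / _); apply: eq_bigr => i _; rewrite mxE.
Qed.

Lemma pseudo_shatteredS (R : realType) (X : Type) (F G : set (X -> R)) m
    (xs : 'I_m -> X) :
  (F `<=` G)%classic -> pseudo_shattered F xs -> pseudo_shattered G xs.
Proof.
move=> FG [c realize]; exists c => y.
by have [f [/FG Gf sg_f]] := realize y; exists f.
Qed.

Lemma expR2_le8 (R : realType) : expR (2 : R) <= 8.
Proof.
have e16 : 15 / 16 <= expR (- (1 / 16) : R).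
  by have := expR_ge1Dx (- (1 / 16) : R); lra.
have : 1 / 8 <= expR (- 2 : R).
  have -> : (- 2 : R) = 32%:R * - (1 / 16) by lra.
  rewrite expRM_natl; apply: le_trans (lerXn2r 32 _ _ e16); rewrite ?nnegrE; lra.
have := expR_gt0 (2 : R); have := divff (lt0r_neq0 (expR_gt0 (2 : R))).
rewrite expRN; nra.
Qed.

Lemma ln_8e_ge3 (R : realType) : 3 <= ln (8 * expR 1 : R).
Proof.
rewrite lnM ?posrE ?expR_gt0 // expRK.
suff : 2 <= ln (8 : R) by lra.
by rewrite -[X in X <= _](expRK 2) ler_ln ?posrE ?expR_gt0 ?expR2_le8.
Qed.

Theorem lemma14 (R : realType) (X : Type) (d : nat) (mu : X -> 'I_d -> R)
  (Cx Ca : R) (hCx : 0 < Cx) (hCa : 0 < Ca) :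
  pdim_le (W_class mu Cx Ca) (4 * (d.+1)%:R * ln (8 * expR 1)).
Proof.
move=> m xs /(pseudo_shatteredS (@W_class_sub R X d mu Cx Ca)).
move=> /ratio_class_shattered_le; rewrite dim_matrix mul1r -(ler_nat R) natrM => le_m.
have := ln_8e_ge3 R; have : (0 : R) <= d%:R by [].
rewrite -natr1; nra.
Qed.
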